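(* Let $\Gamma$ and the data $s_0,\eta_0,\Xi$ be as in the context and let $B\subset\mathbb R^{n-1}$ be a fixed closed ball. There exist constants $0<c\le C$ (depending on $\Gamma$, the data and $B$) such that for every cusp point $\gamma\xi\infty\in B$ ($\gamma\in\Gamma$, $\xi\in\Xi$, $\gamma\xi\notin P$), $c\,h(\gamma\xi\infty)\le\tilde h(\gamma\xi\infty)\le C\,h(\gamma\xi\infty)$.
   Context: $n\ge2$, $G=\mathrm{SO}(n,1)$, $K\cong\mathrm{SO}(n)$ maximal compact, $\mathbb H^n=G/K$ with hyperbolic distance $d$, $o=K\in G/K$. $A=\{a(t)\}$ a one-parameter $\mathbb R$-split torus with $\mathfrak g=\mathfrak g_{-1}\oplus\mathfrak z(A)\oplus\mathfrak g_{+1}$, $\mathrm{Ad}(a(t))=e^{\pm t}$ on $\mathfrak g_{\pm1}$; $M=Z_G(A)\cap K$, $N=\exp\mathfrak g_{+1}$, $\mathfrak g_{+1}\cong\mathbb R^{n-1}$ with $\mathrm{Ad}(M)$-invariant Euclidean norm, $u(\mathbf x)=\exp\mathbf x$; $\sigma\in K$ with $\sigma^2=e$, $\sigma a(t)\sigma^{-1}=a(-t)$; $P=MAN$. Each $g\in G\setminus P$ is $g=u(\mathbf x)\sigma ma(r)u(\mathbf y)$ with $\mathbf x,r$ unique; $\partial\mathbb H^n=G/P\cong\mathbb R^{n-1}\cup\{\infty\}$ via $u(\mathbf x)\sigma P\mapsto\mathbf x$, $P\mapsto\infty$. $\Omega(\eta,s)=\eta\{a(t):t\ge s\}K$. $\Gamma$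 discrete, finite covolume, $\Gamma\backslash\mathbb H^n$ non-compact, with fixed $s_0>0$, compact $\eta_0\subset N$, finite $\Xi\ni e$ satisfying: (i) $G=\Gamma\Xi\Omega(\eta_0,s_0)$; (ii) $\Gamma\cap\xi N\xi^{-1}$ cocompact in $\xi N\xi^{-1}$; (iii) for compact $\eta$, $\{\gamma:\gamma\Xi\Omega(\eta,s_0)\cap\Omega(\eta,s_0)\ne\emptyset\}$ finite; (iv) for compact $\eta\supseteq\eta_0$ some $s_1>s_0$ with $\gamma\xi_1\Omega(\eta,s_0)\cap\xi_2\Omega(\eta,s_1)\ne\emptyset\Rightarrow\xi_1=\xi_2,\gamma\in\xi_1NM\xi_1^{-1}$. Height: for $\gamma\xi=u(\mathbf x_1)\sigma ma(r)u(\mathbf y)$, $\gamma\xi\infty=\mathbf x_1$, $h(\gamma\xi\infty)=e^r$. Busemann function: for $\zeta\in\partial\mathbb H^n$, $x,y\in\mathbb H^n$, $B_\zeta(x,y)=\lim_{t\to\infty}\big(d(x,\zeta(t))-d(y,\zeta(t))\big)$ for any geodesic ray $\zeta(t)$ converging to $\zeta$. Busemann height: $\tilde h(\gamma\xi\infty)=\exp\big(B_{\xi\infty}(\gamma^{-1}o,o)\big)$. *)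

From HB Require Import structures.
From mathcomp Require Import all_boot all_order all_algebra.
From mathcomp Require Import all_classical all_reals all_analysis.
Set Implicit Arguments. Unset Strict Implicit. Unset Printing Implicit Defensive.
Import Order.TTheory GRing.Theory Num.Theory.
Import numFieldNormedType.Exports.
Local Open Scope classical_set_scope.
Local Open Scope ring_scope.

(* We work in R^(k+2) with k = n-1, coordinates
   (v_0, v_1 | w) with w in R^k, and the Lorentzian form
     <v,v'> = -(v_0 v'_1 + v_1 v'_0)/2 + w.w'   (signature (n,1)).
   G = SO_0 of this form (det 1, preserving the future sheet), which is
   conjugate in GL_(n+1)(R) to SO_0(n,1) with the diagonal form.
   H^n = G.p0 (hyperboloid model), p0 = (1,1|0), o = p0, K = Stab_G(p0). *)

Section Model.
Variables (R : realType) (k : nat).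

Definition Jform : 'M[R]_(k.+2) :=
  block_mx (\matrix_(i < 2, j < 2) (if i == j then 0 else - 2^-1)) 0 0 1%:M.

Definition bil (v w : 'cV[R]_(k.+2)) : R := (v^T *m Jform *m w) 0 0.

Definition p0 : 'cV[R]_(k.+2) := col_mx (\col_(i < 2) 1) 0.

Definition inG (g : 'M[R]_(k.+2)) : Prop :=
  g^T *m Jform *m g = Jform /\ \det g = 1 /\ bil p0 (g *m p0) < 0.

Definition inK (g : 'M[R]_(k.+2)) : Prop := inG g /\ g *m p0 = p0.

Definition arccosh (z : R) : R := ln (z + Num.sqrt (z ^+ 2 - 1)).
Definition hdist (v w : 'cV[R]_(k.+2)) : R := arccosh (- bil v w).

(* split torus A = {a(t)}, Ad(a(t)) = e^t on Lie(N) *)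
Definition aa (t : R) : 'M[R]_(k.+2) :=
  block_mx (\matrix_(i < 2, j < 2)
              (if i == j then (if (i : nat) == 0%N then expR t else expR (- t)) else 0))
           0 0 1%:M.

Definition inM (m : 'M[R]_(k.+2)) : Prop :=
  inK m /\ forall t, m *m aa t = aa t *m m.

(* N = exp g_{+1}, u(x) = exp x, x in R^(n-1) = 'rV_k *)
Definition uu (x : 'rV[R]_k) : 'M[R]_(k.+2) :=
  block_mx (\matrix_(i < 2, j < 2)
              (if i == j then 1 else if (i : nat) == 0%N then (x *m x^T) 0 0 else 0))
           (col_mx (2%:R *: x) (0 : 'M[R]_(1, k))) (row_mx (0 : 'M[R]_(k, 1)) x^T) 1%:M.

Definition enorm (x : 'rV[R]_k) : R := Num.sqrt ((x *m x^T) 0 0).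

(* sigma in K, sigma^2 = 1, sigma a(t) sigma^-1 = a(-t) *)
Definition sig : 'M[R]_(k.+2) :=
  block_mx (\matrix_(i < 2, j < 2) (if i == j then 0 else 1)) 0 0
           (\matrix_(i < k, j < k) (if i == j then (if (i : nat) == 0%N then -1 else 1) else 0)).

Definition inP (g : 'M[R]_(k.+2)) : Prop :=
  exists m t x, inM m /\ g = m *m aa t *m uu x.

(* Omega(eta, s) = eta {a(t) : t >= s} K, with eta = u(E) *)
Definition Omega (E : set 'rV[R]_k) (s : R) (g : 'M[R]_(k.+2)) : Prop :=
  exists x t c, E x /\ s <= t /\ inK c /\ g = uu x *m aa t *m c.

Definition in_conjN (xi g : 'M[R]_(k.+2)) : Prop :=
  exists x, g = xi *m uu x *m invmx xi.

Definition in_conjNM (xi g : 'M[R]_(k.+2)) : Prop :=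
  exists x m, inM m /\ g = xi *m uu x *m m *m invmx xi.

(* Busemann function B_{g oo}(v,w), computed along the unit-speed geodesic
   ray t |-> g a(t) o (t -> +oo), which converges to g oo = gP. *)
Definition busemann (g : 'M[R]_(k.+2)) (v w : 'cV[R]_(k.+2)) : R :=
  lim ((hdist v (g *m aa t *m p0) - hdist w (g *m aa t *m p0)) @[t --> +oo]).

Definition bheight (gam xi : 'M[R]_(k.+2)) : R :=
  expR (busemann xi (invmx gam *m p0) p0).

Definition discrete_subgroup (Gam : 'M[R]_(k.+2) -> Prop) : Prop :=
  (forall g, Gam g -> inG g) /\ Gam 1%:M /\
  (forall g h, Gam g -> Gam h -> Gam (g *m h)) /\
  (forall g, Gam g -> Gam (invmx g)) /\
  (forall g, Gam g -> exists2 e : R, 0 < e &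
     forall h, Gam h -> (forall i j, `|h i j - g i j| < e) -> h = g).

Definition noncompact_quotient (Gam : 'M[R]_(k.+2) -> Prop) : Prop :=
  forall rho : R, exists g, inG g /\
     forall gam, Gam gam -> rho < hdist (g *m p0) (gam *m p0).

End Model.

From HB Require Import structures.
From mathcomp Require Import all_boot all_order all_algebra.
From mathcomp Require Import all_classical all_reals all_analysis.
From mathcomp Require Import ring lra.
Set Implicit Arguments.
Unset Strict Implicit.
Unset Printing Implicit Defensive.
Import Order.TTheory GRing.Theory Num.Theory.
Import numFieldNormedType.Exports.
Local Open Scope classical_set_scope.
Local Open Scope ring_scope.

(* In the hyperboloid model the boundary point g oo is the null ray spanned by
   g e, with e = (1, 0 | 0); since d(v, g a(t) o) - t --> ln (-2 <v, g e>), the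
   Busemann function is B_{g oo}(v, w) = ln (<v, g e> / <w, g e>).  For
   gamma xi = u(x) sigma m a(r) u(y) the vector e is fixed by u(y) and m, scaled
   by e^r under a(r) and sent to (0, 1 | 0) by sigma, whence
     ~h(gamma xi oo) = e^r (1 + |x|^2) / (-2 <o, xi e>).
   The factor 1 + |x|^2 is bounded on the ball, and -<o, xi e> is positive (a
   null and a timelike future vector pair negatively) and takes finitely many
   values. *)

Section RealInequalities.
Variable R : realFieldType.

Lemma cauchy_schwarz_sum (k : nat) (f g : 'I_k -> R) :
  (\sum_i f i * g i) ^+ 2 <= (\sum_i f i ^+ 2) * (\sum_i g i ^+ 2).
Proof.
set A := \sum_i f i ^+ 2; set B := \sum_i g i ^+ 2; set D := \sum_i f i * g i.
have A_ge0 : 0 <= A by apply: sumr_ge0 => i _; apply: sqr_ge0.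
have B_ge0 : 0 <= B by apply: sumr_ge0 => i _; apply: sqr_ge0.
have [A0|A_neq0] := eqVneq A 0.
  have f0 i : f i = 0.
    apply/eqP; rewrite -sqrf_eq0; apply/eqP.
    exact: (psumr_eq0P (fun i _ => sqr_ge0 (f i)) A0).
  have -> : D = 0 by rewrite /D big1 // => i _; rewrite f0 mul0r.
  by rewrite expr0n /= mulr_ge0.
have A_gt0 : 0 < A by rewrite lt_def A_neq0 A_ge0.
have sum_sq_ge0 : 0 <= \sum_i (D * f i - A * g i) ^+ 2.
  by apply: sumr_ge0 => i _; apply: sqr_ge0.
have sum_sqE : \sum_i (D * f i - A * g i) ^+ 2 = A * (A * B - D ^+ 2).
  transitivity (\sum_i (D ^+ 2 * f i ^+ 2 - 2 * D * A * (f i * g i) + A ^+ 2 * g i ^+ 2)).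
    by apply: eq_bigr => i _; ring.
  by rewrite !big_split /= sumrN -!mulr_sumr -/A -/B -/D; ring.
by move: sum_sq_ge0; rewrite sum_sqE pmulr_rge0 // subr_ge0.
Qed.

(* Reverse Cauchy-Schwarz for the form -(p0 q1 + p1 q0)/2 + u.v: for null vectors
   (a, b | u) and (c, d | v) pairing to -1/2, with D = u.v (so D^2 <= ab cd), a
   future-pointing sum forces the first vector to be future-pointing. *)
Lemma null_pair_future (a b c d D : R) :
  0 <= a * b -> 0 <= c * d -> D * 2 = a * d + b * c - 1 ->
  D ^+ 2 <= (a * b) * (c * d) -> 0 < a + b + c + d -> 0 < a + b.
Proof.
move=> ab_ge0 cd_ge0 DE DCS sum_gt0; rewrite ltNge; apply/negP => ab_le0.
have a_le0 : a <= 0 by nra.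
have b_le0 : b <= 0 by nra.
have c_ge0 : 0 <= c by nra.
have d_ge0 : 0 <= d by nra.
have : 0 <= (a * d - b * c) ^+ 2 by apply: sqr_ge0.
have : (D * 2) ^+ 2 = (a * d - b * c) ^+ 2 + 4 * (a * b) * (c * d)
                      - 2 * (a * d + b * c) + 1 by rewrite DE; ring.
nra.
Qed.

Lemma seq_pos_bounds (T : eqType) (f : T -> R) (s : seq T) :
  (forall x, x \in s -> 0 < f x) ->
  exists L U, 0 < L /\ forall x, x \in s -> L <= f x <= U.
Proof.
elim: s => [|a s IH] f_gt0; first by exists 1, 1; split => // x; rewrite in_nil.
have [L [U [L_gt0 LU]]] := IH (fun x xs => f_gt0 x (@mem_behead _ (a :: s) x xs)).
have fa_gt0 : 0 < f a by apply: f_gt0; rewrite mem_head.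
exists (Num.min L (f a)), (Num.max U (f a)); split; first by rewrite lt_min L_gt0.
move=> x; rewrite in_cons => /predU1P [->|xs]; first by rewrite ge_min le_max !lexx !orbT.
by have /andP [Lx xU] := LU x xs; rewrite ge_min le_max Lx xU.
Qed.

Lemma ratio_bounds (L U c X M : R) : 0 < L -> L <= c <= U -> 0 <= X <= M ->
  1 / (2 * U) <= (1 + X) / (2 * c) <= (1 + M) / (2 * L).
Proof.
move=> L_gt0 /andP [Lc cU] /andP [X_ge0 XM].
have c_gt0 : 0 < c by exact: lt_le_trans Lc.
have U_gt0 : 0 < U by exact: lt_le_trans cU.
apply/andP; split.
- by rewrite ler_pdivrMr ?mulr_gt0 // mulrAC ler_pdivlMr ?mulr_gt0 //; nra.
- by rewrite ler_pdivrMr ?mulr_gt0 // mulrAC ler_pdivlMr ?mulr_gt0 //; nra.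
Qed.

End RealInequalities.

Section RealExp.
Variable R : realType.

Lemma expR_neq1 (t : R) : t != 0 -> expR t != 1.
Proof. by rewrite -expR0 (inj_eq (@expR_inj R)). Qed.

Lemma expRN_neq (t : R) : t != 0 -> expR (- t) != expR t.
Proof. by rewrite (inj_eq (@expR_inj R)) eqNr. Qed.

Lemma cvg_expRN_sqr : (fun t : R => expR (- t) ^+ 2) @ +oo --> (0 : R).
Proof.
have e_cvg : (fun t : R => expR (- t)) @ +oo --> (0 : R) := @cvgr_expR R.
by have := cvgM e_cvg e_cvg; rewrite mulr0 => e2_cvg; exact: e2_cvg.
Qed.

Lemma cvg_expR_shift (a b : R) : (fun t : R => a + b * expR (- t) ^+ 2) @ +oo --> a.
Proof.
have := cvgD (cvg_cst a) (cvgM (cvg_cst b) cvg_expRN_sqr); rewrite mulr0 addr0.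
by move=> sum_cvg; exact: sum_cvg.
Qed.

(* [arccosh z = ln (z + sqrt (z^2 - 1))]; factoring [e^t] out of
   [z = a e^t + b e^-t] leaves a function of [e^-t] only. *)
Lemma arccosh_subE (a b t : R) : 0 < a + b * expR (- t) ^+ 2 ->
  arccosh (a * expR t + b * expR (- t)) - t =
  ln (a + b * expR (- t) ^+ 2 +
      Num.sqrt ((a + b * expR (- t) ^+ 2) ^+ 2 - expR (- t) ^+ 2)).
Proof.
have eNe : expR (- t) * expR t = 1 by rewrite -expRD addNr expR0.
have e_gt0 : 0 < expR t := expR_gt0 t.
move: eNe e_gt0; set s := expR (- t); set e := expR t; set A := a + b * s ^+ 2.
move=> eNe e_gt0 A_gt0.
have zE : a * e + b * s = e * A.
  by rewrite /A mulrDr mulrC; congr (_ + _); rewrite -[LHS]mulr1 -eNe; ring.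
have z2E : (e * A) ^+ 2 - 1 = e ^+ 2 * (A ^+ 2 - s ^+ 2).
  by rewrite -[1 in LHS](expr1n _ 2) -eNe; ring.
rewrite /arccosh zE z2E sqrtrM ?sqr_ge0 // sqrtr_sqr gtr0_norm // -mulrDr.
rewrite lnM ?expRK /= ?[t + _]addrC ?addrK //; rewrite posrE //.
by apply: (lt_le_trans A_gt0); rewrite lerDl sqrtr_ge0.
Qed.

Lemma cvg_arccosh_sub (a b : R) : 0 < a ->
  (fun t : R => arccosh (a * expR t + b * expR (- t)) - t) @ +oo --> ln (a + a).
Proof.
move=> a_gt0; pose A t := a + b * expR (- t) ^+ 2.
have A_cvg : A t @[t --> +oo] --> a := @cvg_expR_shift a b.
have sqrt_cvg : Num.sqrt (A t ^+ 2 - expR (- t) ^+ 2) @[t --> +oo] --> a.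
  rewrite -[X in _ --> X](gtr0_norm a_gt0) -sqrtr_sqr.
  apply: (continuous_cvg _ (@sqrt_continuous R _)).
  have := cvgB (cvgM A_cvg A_cvg) cvg_expRN_sqr; rewrite subr0 -expr2.
  by move=> diff_cvg; exact: diff_cvg.
have arg_cvg : A t + Num.sqrt (A t ^+ 2 - expR (- t) ^+ 2) @[t --> +oo] --> a + a.
  exact: cvgD A_cvg sqrt_cvg.
have ln_cont : {for a + a, continuous (@ln R)} by apply: continuous_ln; rewrite addr_gt0.
apply: cvg_trans (continuous_cvg _ ln_cont arg_cvg); apply: near_eq_cvg.
near=> t; rewrite arccosh_subE //.
by near: t; exact: (cvgr_gt a A_cvg 0 a_gt0).
Unshelve. all: by end_near. Qed.

End RealExp.

Section Hyperboloid.
Variables (R : realType) (k : nat).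

Definition vec2 (p q : R) : 'cV[R]_2 := \col_(i < 2) (if i == ord0 then p else q).

Lemma sum_ord2 (F : 'I_2 -> R) : \sum_(i < 2) F i = F ord0 + F ord_max.
Proof. by rewrite !big_ord_recl big_ord0 addr0; congr (F _ + F _); apply: val_inj. Qed.

Lemma mul_mx2_vec2 (f : 'I_2 -> 'I_2 -> R) p q :
  (\matrix_(i, j) f i j) *m vec2 p q =
  vec2 (f ord0 ord0 * p + f ord0 ord_max * q) (f ord_max ord0 * p + f ord_max ord_max * q).
Proof.
apply/matrixP => i j; rewrite !mxE sum_ord2 !mxE /=.
by case: i => [[|[|//]] ?] /=; congr (f _ _ * _ + f _ _ * _); apply: val_inj.
Qed.

Lemma vec2_inj p q p' q' : vec2 p q = vec2 p' q' -> p = p' /\ q = q'.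
Proof. by move=> /matrixP pq; have := pq ord0 0; have := pq ord_max 0; rewrite !mxE /= => -> ->. Qed.

Lemma add_vec2 p q p' q' : vec2 p q + vec2 p' q' = vec2 (p + p') (q + q').
Proof. by apply/matrixP => i j; rewrite !mxE; case: ifP. Qed.

Lemma scale_vec2 a p q : a *: vec2 p q = vec2 (a * p) (a * q).
Proof. by apply/matrixP => i j; rewrite !mxE; case: ifP. Qed.

Lemma mul_row_vec2 (A B : 'cV[R]_k) p q : (row_mx A B : 'M[R]_(k, 2)) *m vec2 p q = p *: A + q *: B.
Proof.
have split0 : fintype.split (ord0 : 'I_(1 + 1)) = inl (0 : 'I_1).
  by rewrite (_ : ord0 = unsplit (inl (0 : 'I_1)) :> 'I_(1 + 1)) ?unsplitK //; apply: val_inj.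
have split1 : fintype.split (ord_max : 'I_(1 + 1)) = inr (0 : 'I_1).
  by rewrite (_ : ord_max = unsplit (inr (0 : 'I_1)) :> 'I_(1 + 1)) ?unsplitK //;
    apply: val_inj.
apply/matrixP => i j; rewrite !mxE sum_ord2 !mxE !ord1 split0 split1 /=.
by rewrite mulrC [B _ _ * _]mulrC.
Qed.

Lemma vec2_form (f : 'I_2 -> 'I_2 -> R) a0 a1 b0 b1 :
  ((vec2 a0 a1)^T *m (\matrix_(i, j) f i j) *m vec2 b0 b1) 0 0 =
  a0 * (f ord0 ord0 * b0 + f ord0 ord_max * b1) + a1 * (f ord_max ord0 * b0 + f ord_max ord_max * b1).
Proof. by rewrite -mulmxA mul_mx2_vec2 !mxE sum_ord2 !mxE. Qed.

Lemma cV_split (w : 'cV[R]_(k.+2)) : exists p q (c : 'cV[R]_k), w = col_mx (vec2 p q) c.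
Proof.
set u := usubmx (w : 'M[R]_(2 + k, 1)).
exists (u ord0 0), (u ord_max 0), (dsubmx (w : 'M[R]_(2 + k, 1))).
have uE : u = vec2 (u ord0 0) (u ord_max 0).
  apply/matrixP => i j; rewrite !ord1 [in RHS]mxE.
  by case: i => [[|[|//]] ?] /=; congr (u _ _); apply: val_inj.
by rewrite -[w in LHS](@vsubmxK R 2 k 1) -/u {1}uE.
Qed.

(* [2 + k] and [k.+2] are convertible but not syntactically equal, so the
   block-matrix lemmas are restated at size [k.+2] to be usable by [rewrite]. *)
Lemma mul_block_col2 (A : 'M[R]_2) (B : 'M[R]_(2, k)) (C : 'M[R]_(k, 2)) (D : 'M[R]_k)
    (u : 'cV[R]_2) (v : 'cV[R]_k) :
  (block_mx A B C D : 'M[R]_(k.+2)) *m (col_mx u v : 'cV[R]_(k.+2)) =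
  (col_mx (A *m u + B *m v) (C *m u + D *m v) : 'cV[R]_(k.+2)).
Proof. exact: (@mul_block_col R 2 k 2 k 1). Qed.

Lemma mul_row_block2 (A : 'rV[R]_2) (A' : 'rV[R]_k) (B : 'M[R]_2) (B' : 'M[R]_(2, k))
    (C : 'M[R]_(k, 2)) (D : 'M[R]_k) :
  (row_mx A A' : 'rV[R]_(k.+2)) *m (block_mx B B' C D : 'M[R]_(k.+2)) =
  (row_mx (A *m B + A' *m C) (A *m B' + A' *m D) : 'rV[R]_(k.+2)).
Proof. exact: (@mul_row_block R 1 2 k 2 k). Qed.

Lemma mul_row_col2 (A : 'rV[R]_2) (A' : 'rV[R]_k) (u : 'cV[R]_2) (v : 'cV[R]_k) :
  (row_mx A A' : 'rV[R]_(k.+2)) *m (col_mx u v : 'cV[R]_(k.+2)) = A *m u + A' *m v.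
Proof. exact: (@mul_row_col R 1 2 k 1). Qed.

Lemma tr_col_mx2 (u : 'cV[R]_2) (v : 'cV[R]_k) :
  (col_mx u v : 'cV[R]_(k.+2))^T = (row_mx u^T v^T : 'rV[R]_(k.+2)).
Proof. exact: (@tr_col_mx R 2 k 1). Qed.

Lemma add_col_mx2 (u u' : 'cV[R]_2) (v v' : 'cV[R]_k) :
  (col_mx u v : 'cV[R]_(k.+2)) + col_mx u' v' = col_mx (u + u') (v + v').
Proof. exact: (@add_col_mx _ 2 k 1). Qed.

Lemma scale_col_mx2 a (u : 'cV[R]_2) (v : 'cV[R]_k) :
  a *: (col_mx u v : 'cV[R]_(k.+2)) = col_mx (a *: u) (a *: v).
Proof. exact: (@scale_col_mx R 2 k 1). Qed.

Lemma bil_col a0 a1 b0 b1 (c d : 'cV[R]_k) :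
  bil (col_mx (vec2 a0 a1) c) (col_mx (vec2 b0 b1) d) = - (a0 * b1 + a1 * b0) / 2 + (c^T *m d) 0 0.
Proof.
rewrite /bil /Jform tr_col_mx2 mul_row_block2 ?mulmx0 addr0 add0r mulmx1 mul_row_col2 mxE.
by rewrite vec2_form /=; congr (_ + _); ring.
Qed.

Lemma bilDr (v x y : 'cV[R]_(k.+2)) : bil v (x + y) = bil v x + bil v y.
Proof. by rewrite /bil mulmxDr mxE. Qed.

Lemma bilZr (v x : 'cV[R]_(k.+2)) a : bil v (a *: x) = a * bil v x.
Proof. by rewrite /bil -scalemxAr mxE. Qed.

Lemma bil_inG g (u v : 'cV[R]_(k.+2)) : inG g -> bil (g *m u) (g *m v) = bil u v.
Proof.
move=> [gJg _]; rewrite /bil trmx_mul -!mulmxA (mulmxA g^T) (mulmxA (g^T *m _)) gJg.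
by rewrite !mulmxA.
Qed.

Lemma bil_invmx_inG g (u v : 'cV[R]_(k.+2)) : inG g -> bil (invmx g *m u) v = bil u (g *m v).
Proof.
move=> [gJg [det_g _]].
have g_unit : g \in unitmx by rewrite unitmxE det_g unitr1.
have invJ : (invmx g)^T *m Jform R k = Jform R k *m g.
  by rewrite -{1}gJg !mulmxA -trmx_mul mulmxV // trmx1 mul1mx.
by rewrite /bil trmx_mul -(mulmxA _ (invmx g)^T) invJ !mulmxA.
Qed.

(* The null vectors spanning the boundary points [oo = P] and [0 = sigma P]. *)
Definition null_inf : 'cV[R]_(k.+2) := col_mx (vec2 1 0) 0.
Definition null_zero : 'cV[R]_(k.+2) := col_mx (vec2 0 1) 0.

Lemma p0_col : p0 R k = col_mx (vec2 1 1) 0.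
Proof.
by rewrite /p0 (_ : \col_(i < 2) 1 = vec2 1 1) //; apply/matrixP => i j; rewrite !mxE; case: ifP.
Qed.

Lemma p0_null : p0 R k = null_inf + null_zero.
Proof. by rewrite p0_col add_col_mx2 addr0 add_vec2 addr0 add0r. Qed.

Lemma bil_p0 b0 b1 (d : 'cV[R]_k) : bil (p0 R k) (col_mx (vec2 b0 b1) d) = - (b0 + b1) / 2.
Proof. by rewrite p0_col bil_col trmx0 mul0mx mxE addr0 !mul1r addrC. Qed.

Lemma aa_col t p q (v : 'cV[R]_k) :
  aa k t *m col_mx (vec2 p q) v = col_mx (vec2 (expR t * p) (expR (- t) * q)) v.
Proof.
rewrite /aa mul_block_col2 mul_mx2_vec2 ?mulmx0 ?mul0mx addr0 add0r mul1mx /=.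
by rewrite !mul0r addr0 add0r.
Qed.

Lemma uu_col (x : 'rV[R]_k) p q :
  uu x *m col_mx (vec2 p q) 0 = col_mx (vec2 (p + (x *m x^T) 0 0 * q) q) (q *: x^T).
Proof.
rewrite /uu mul_block_col2 mul_mx2_vec2 ?mulmx0 !addr0 mul_row_vec2 scaler0 add0r /=.
by rewrite !mul1r mul0r add0r.
Qed.

Lemma sig_col p q : sig R k *m col_mx (vec2 p q) 0 = col_mx (vec2 q p) 0.
Proof.
rewrite /sig mul_block_col2 mul_mx2_vec2 ?mulmx0 ?mul0mx !addr0 /=.
by rewrite !mul1r !mul0r addr0 add0r.
Qed.

Lemma aa_eigen_expR t w : t != 0 -> aa k t *m w = expR t *: w ->
  exists p, w = col_mx (vec2 p 0) 0.
Proof.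
move=> t_neq0; have [p [q [c ->]]] := cV_split w.
rewrite aa_col scale_col_mx2 scale_vec2 => /(@eq_col_mx _ 2 k 1) [/vec2_inj [_ qE] cE].
have -> : c = 0.
  apply/eqP; move/eqP: cE; rewrite -subr_eq0 -{1}(scale1r c) -scalerBl scalemx_eq0.
  by rewrite subr_eq0 eq_sym (negbTE (expR_neq1 t_neq0)).
have -> : q = 0.
  apply/eqP; move/eqP: qE; rewrite -subr_eq0 -mulrBl mulf_eq0 subr_eq0.
  by rewrite (negbTE (expRN_neq t_neq0)).
by exists p.
Qed.

Lemma aa_eigen_expRN t w : t != 0 -> aa k t *m w = expR (- t) *: w ->
  exists q, w = col_mx (vec2 0 q) 0.
Proof.
move=> t_neq0; have [p [q [c ->]]] := cV_split w.
rewrite aa_col scale_col_mx2 scale_vec2 => /(@eq_col_mx _ 2 k 1) [/vec2_inj [pE _] cE].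
have -> : c = 0.
  apply/eqP; move/eqP: cE; rewrite -subr_eq0 -{1}(scale1r c) -scalerBl scalemx_eq0.
  by rewrite subr_eq0 eq_sym (negbTE (expR_neq1 _)) ?oppr_eq0.
have -> : p = 0.
  apply/eqP; move/eqP: pE; rewrite -subr_eq0 -mulrBl mulf_eq0 subr_eq0.
  by rewrite eq_sym (negbTE (expRN_neq t_neq0)).
by exists q.
Qed.

Lemma aa_null_inf t : aa k t *m null_inf = expR t *: null_inf.
Proof. by rewrite aa_col scale_col_mx2 scale_vec2 scaler0 !mulr0 mulr1. Qed.

Lemma aa_null_zero t : aa k t *m null_zero = expR (- t) *: null_zero.
Proof. by rewrite aa_col scale_col_mx2 scale_vec2 scaler0 !mulr0 mulr1. Qed.

Lemma inM_fix_null_inf m : inM m -> m *m null_inf = null_inf.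
Proof.
move=> [[_ m_p0] m_aa].
have [p mE0] : exists p, m *m null_inf = col_mx (vec2 p 0) 0.
  apply: (aa_eigen_expR (oner_neq0 R)).
  by rewrite mulmxA -m_aa -mulmxA aa_null_inf scalemxAr.
have [q mE1] : exists q, m *m null_zero = col_mx (vec2 0 q) 0.
  apply: (aa_eigen_expRN (oner_neq0 R)).
  by rewrite mulmxA -m_aa -mulmxA aa_null_zero scalemxAr.
move: m_p0; rewrite p0_null mulmxDr mE0 mE1 -p0_null p0_col add_col_mx2 add_vec2 addr0 add0r.
by rewrite /null_inf => /(@eq_col_mx _ 2 k 1) [/vec2_inj [-> _] _].
Qed.

Lemma uu_null_inf x : uu x *m null_inf = null_inf.
Proof. by rewrite uu_col mulr0 addr0 scale0r. Qed.

Lemma sig_null_inf : sig R k *m null_inf = null_zero.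
Proof. exact: sig_col. Qed.

Lemma dotmx_sum (c d : 'cV[R]_k) : (c^T *m d) 0 0 = \sum_i c i 0 * d i 0.
Proof. by rewrite mxE; apply: eq_bigr => i _; rewrite mxE. Qed.

Lemma dotmx_ge0 (c : 'cV[R]_k) : 0 <= (c^T *m c) 0 0.
Proof. by rewrite dotmx_sum; apply: sumr_ge0 => i _; rewrite -expr2 sqr_ge0. Qed.

Lemma dotmx_cauchy_schwarz (c d : 'cV[R]_k) :
  ((c^T *m d) 0 0) ^+ 2 <= (c^T *m c) 0 0 * (d^T *m d) 0 0.
Proof. by rewrite !dotmx_sum; apply: cauchy_schwarz_sum. Qed.

Lemma bil_null_inf : bil null_inf null_inf = 0.
Proof. by rewrite bil_col trmx0 mul0mx mxE; ring. Qed.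

Lemma bil_null_zero : bil null_zero null_zero = 0.
Proof. by rewrite bil_col trmx0 mul0mx mxE; ring. Qed.

Lemma bil_null_inf_zero : bil null_inf null_zero = - 2^-1.
Proof. by rewrite bil_col trmx0 mul0mx mxE; ring. Qed.

Definition horo_factor (g : 'M[R]_(k.+2)) : R := - bil (p0 R k) (g *m null_inf).

Lemma horo_factor_gt0 g : inG g -> 0 < horo_factor g.
Proof.
move=> g_G; have [_ [_ g_future]] := g_G.
have [a [b [c gE0]]] := cV_split (g *m null_inf).
have [a' [b' [d gE1]]] := cV_split (g *m null_zero).
have null_bil u v := bil_inG u v g_G.
have := null_bil null_inf null_inf; have := null_bil null_zero null_zero.
have := null_bil null_inf null_zero.
rewrite bil_null_inf bil_null_zero bil_null_inf_zero gE0 gE1 !bil_col => pair null1 null0.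
move: g_future; rewrite {2}p0_null mulmxDr gE0 gE1 add_col_mx2 add_vec2 bil_p0 => sum_future.
rewrite /horo_factor gE0 bil_p0.
suff : 0 < a + b by lra.
apply: (@null_pair_future _ a b a' b' ((c^T *m d) 0 0)); try lra.
- by have := dotmx_ge0 c; lra.
- by have := dotmx_ge0 d; lra.
- have -> : a * b = (c^T *m c) 0 0 by lra.
  have -> : a' * b' = (d^T *m d) 0 0 by lra.
  exact: dotmx_cauchy_schwarz.
Qed.

Lemma orbit_point_null (g : 'M[R]_(k.+2)) t :
  g *m aa k t *m p0 R k = expR t *: (g *m null_inf) + expR (- t) *: (g *m null_zero).
Proof. by rewrite -mulmxA p0_null mulmxDr aa_null_inf aa_null_zero mulmxDr !scalemxAr. Qed.

Lemma expR_busemann (g : 'M[R]_(k.+2)) v w :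
  0 < - bil v (g *m null_inf) -> 0 < - bil w (g *m null_inf) ->
  expR (busemann g v w) = - bil v (g *m null_inf) / - bil w (g *m null_inf).
Proof.
set a := - bil v (g *m null_inf); set a' := - bil w (g *m null_inf) => a_gt0 a'_gt0.
set b := - bil v (g *m null_zero); set b' := - bil w (g *m null_zero).
have dist_orbit u t : hdist u (g *m aa k t *m p0 R k) =
    arccosh ((- bil u (g *m null_inf)) * expR t + (- bil u (g *m null_zero)) * expR (- t)).
  by rewrite /hdist orbit_point_null bilDr !bilZr; congr arccosh; ring.
have diff_cvg : (fun t => hdist v (g *m aa k t *m p0 R k) - hdist w (g *m aa k t *m p0 R k))
    @ +oo --> ln (a + a) - ln (a' + a').
  apply: cvg_trans (cvgB (@cvg_arccosh_sub _ a b a_gt0) (@cvg_arccosh_sub _ a' b' a'_gt0)).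
  by apply: near_eq_cvg; near=> t; rewrite !dist_orbit !fctE; ring.
rewrite /busemann (cvg_lim _ diff_cvg) // expRD expRN !lnK ?posrE ?addr_gt0 //.
by field; rewrite !lt0r_neq0 ?addr_gt0.
Unshelve. all: by end_near. Qed.

Lemma row_sqnorm_sum (x : 'rV[R]_k) : (x *m x^T) 0 0 = \sum_i x 0 i ^+ 2.
Proof. by rewrite mxE; apply: eq_bigr => i _; rewrite mxE expr2. Qed.

Lemma row_sqnorm_ge0 (x : 'rV[R]_k) : 0 <= (x *m x^T) 0 0.
Proof. by rewrite row_sqnorm_sum; apply: sumr_ge0 => i _; apply: sqr_ge0. Qed.

Lemma row_sqnorm_ball (x ctr : 'rV[R]_k) rad : enorm (x - ctr) <= rad ->
  (x *m x^T) 0 0 <= 2 * rad ^+ 2 + 2 * (ctr *m ctr^T) 0 0.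
Proof.
rewrite /enorm => x_ball; have d_ge0 := row_sqnorm_ge0 (x - ctr).
have d_le : ((x - ctr) *m (x - ctr)^T) 0 0 <= rad ^+ 2.
  rewrite -(sqr_sqrtr d_ge0) lerXn2r // ?nnegrE ?sqrtr_ge0 //.
  exact: le_trans (sqrtr_ge0 _) x_ball.
apply: le_trans (_ : _ <= 2 * ((x - ctr) *m (x - ctr)^T) 0 0 + 2 * (ctr *m ctr^T) 0 0) _;
  last by lra.
rewrite !row_sqnorm_sum !mulr_sumr -big_split /=; apply: ler_sum => i _.
by rewrite !mxE; have := sqr_ge0 (x 0 i - 2 * ctr 0 i); nra.
Qed.

Lemma bheight_cusp (gam xi m : 'M[R]_(k.+2)) x r y : inG gam -> inG xi -> inM m ->
  gam *m xi = uu x *m sig R k *m m *m aa k r *m uu y ->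
  bheight gam xi = expR r * ((1 + (x *m x^T) 0 0) / (2 * horo_factor xi)).
Proof.
move=> gam_G xi_G m_M gam_xiE.
have X_ge0 := row_sqnorm_ge0 x.
have xi_gt0 := horo_factor_gt0 xi_G.
have pairE : bil (invmx gam *m p0 R k) (xi *m null_inf) = - (expR r * (1 + (x *m x^T) 0 0) / 2).
  rewrite bil_invmx_inG // mulmxA gam_xiE -!mulmxA uu_null_inf aa_null_inf -!scalemxAr.
  rewrite inM_fix_null_inf // sig_null_inf uu_col bilZr bil_p0; lra.
rewrite /bheight expR_busemann.
- by rewrite pairE -/(horo_factor xi) opprK; field; rewrite lt0r_neq0.
- by rewrite pairE opprK divr_gt0 // mulr_gt0 ?expR_gt0 //; lra.
- exact: xi_gt0.
Qed.

End Hyperboloid.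

Theorem proposition3p5 (R : realType) (n : nat) (Hn : (2 <= n)%N)
  (Gam : 'M[R]_(n.-1.+2) -> Prop) (Xi : seq 'M[R]_(n.-1.+2))
  (s0 : R) (eta0 : set 'rV[R]_(n.-1))
  (HGam : discrete_subgroup Gam)
  (Hnoncpt : noncompact_quotient Gam)
  (Hs0 : 0 < s0) (Heta0 : compact eta0)
  (HXiG : forall xi, xi \in Xi -> inG xi) (HXi1 : 1%:M \in Xi)
  (H_i : forall g, inG g -> exists gam xi w,
      [/\ Gam gam, xi \in Xi, Omega eta0 s0 w & g = gam *m xi *m w])
  (H_ii : forall xi, xi \in Xi -> exists2 E : set 'rV[R]_(n.-1), compact E &
      forall x, exists gam e,
        [/\ Gam gam, in_conjN xi gam, E e &
            xi *m uu x *m invmx xi = gam *m (xi *m uu e *m invmx xi)])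
  (H_iii : forall eta : set 'rV[R]_(n.-1), compact eta ->
      exists s : seq 'M[R]_(n.-1.+2), forall gam, Gam gam ->
        (exists xi w w', [/\ xi \in Xi, Omega eta s0 w, Omega eta s0 w'
                            & gam *m xi *m w = w']) ->
        gam \in s)
  (H_iv : forall eta : set 'rV[R]_(n.-1), compact eta -> eta0 `<=` eta ->
      exists2 s1, s0 < s1 &
        forall gam xi1 xi2, Gam gam -> xi1 \in Xi -> xi2 \in Xi ->
          (exists w w', [/\ Omega eta s0 w, Omega eta s1 w'
                          & gam *m xi1 *m w = xi2 *m w']) ->
          xi1 = xi2 /\ in_conjNM xi1 gam)
  (ctr : 'rV[R]_(n.-1)) (rad : R) (Hrad : 0 < rad) :
  exists c C : R, [/\ 0 < c, c <= C &
    forall gam xi (x : 'rV[R]_(n.-1)) (m : 'M[R]_(n.-1.+2)) (r : R) (y : 'rV[R]_(n.-1)),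
      Gam gam -> xi \in Xi -> ~ inP (gam *m xi) ->
      inM m -> gam *m xi = uu x *m @sig R n.-1 *m m *m aa n.-1 r *m uu y ->
      enorm (x - ctr) <= rad ->
      c * expR r <= bheight gam xi /\ bheight gam xi <= C * expR r].
Proof.
have [L [U [L_gt0 horo_LU]]] := @seq_pos_bounds _ _ (@horo_factor R n.-1) Xi
  (fun xi xi_Xi => horo_factor_gt0 (HXiG xi xi_Xi)).
pose M := 2 * rad ^+ 2 + 2 * (ctr *m ctr^T) 0 0.
have M_ge0 : 0 <= M by rewrite /M; have := row_sqnorm_ge0 ctr; have := sqr_ge0 rad; lra.
have ratio_bounds_at xi X : xi \in Xi -> 0 <= X <= M ->
    1 / (2 * U) <= (1 + X) / (2 * horo_factor xi) <= (1 + M) / (2 * L).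
  by move=> xi_Xi; apply: ratio_bounds L_gt0 (horo_LU xi xi_Xi).
have zero_M : (0 : R) <= 0 <= M by rewrite lexx M_ge0.
have /andP [lo1 up1] := ratio_bounds_at _ _ HXi1 zero_M.
exists (1 / (2 * U)), ((1 + M) / (2 * L)); split.
- have /andP [_ U1] := horo_LU _ HXi1.
  by rewrite divr_gt0 // mulr_gt0 // (lt_le_trans (horo_factor_gt0 (HXiG _ HXi1)) U1).
- exact: le_trans lo1 up1.
move=> gam xi x m r y gam_Gam xi_Xi _ m_M gam_xiE x_ball.
rewrite (bheight_cusp (proj1 HGam gam gam_Gam) (HXiG xi xi_Xi) m_M gam_xiE).
have X_M : 0 <= (x *m x^T) 0 0 <= M by rewrite row_sqnorm_ge0 (row_sqnorm_ball x_ball).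
have /andP [lo up] := ratio_bounds_at _ _ xi_Xi X_M.
by rewrite ![_ * expR r]mulrC !ler_pM2l ?expR_gt0.
Qed.
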